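(* Let $p$ be a prime and $a,b$ positive integers with $b>1$, and suppose $k=\frac{p^{ab}-1}{b(p^a-1)}$ is an integer and $u=b(p^a-1)$ is a primitive divisor of $p^{ab}-1$. Let $\omega$ be a primitive element of $\mathbb{F}_{p^{ab}}$; for $\alpha\in\mathbb{F}_{p^{ab}}$ write $\alpha=\sum_{i=0}^{b-1}c_i\omega^{ik}$ with $c_i\in\mathbb{F}_{p^a}$ and set $[\alpha]_i=c_{i-1}$ for $i=1,\ldots,b$. For $r\ge1$ define $$N_r=k^{r}\sum_{\substack{r_1+\cdots+r_b=r\\ r_i\ge0}} \frac{r!}{r_{1}!\cdots r_{b}!}\prod_{i=1}^b a_{i}(\alpha),\qquad a_{i}(\alpha)=\begin{cases}\frac{p^{a}-1}{p^{a}}\big((p^{a}-1)^{r_i-1}-(-1)^{r_i-1}\big) & \text{if } [\alpha]_i=0,\\[1mm] \frac{1}{p^{a}}\big((p^{a}-1)^{r_i}-(-1)^{r_i}\big) & \text{if } [\alpha]_i\neq 0.\end{cases}$$ Let $s\ge1$ and let $M_s$ be the number of $(x_1,\ldots,x_s)\in\mathbb{F}_{p^{ab}}^s$ with $x_1^k+\cdots+x_s^k=\alpha$. Then $$M_s=\begin{cases}\sum_{r=1}^{s}\binom{s}{r}N_r & \text{if }\alpha\neq0,\\[1mm] 1+\sum_{r=1}^{s}\binom{s}{r}N_r & \text{if }\alpha=0.\end{cases}$$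
   Context: A divisor $u$ of $p^m-1$ is primitive if $u\nmid p^h-1$ for all $1\le h<m$. Under the hypotheses, $\{1,\omega^k,\ldots,\omega^{(b-1)k}\}$ is a basis of $\mathbb{F}_{p^{ab}}$ over $\mathbb{F}_{p^a}$. *)

From HB Require Import structures.
From mathcomp Require Import all_boot all_order all_algebra all_field.
Set Implicit Arguments. Unset Strict Implicit. Unset Printing Implicit Defensive.
Import Order.TTheory GRing.Theory Num.Theory.
Local Open Scope ring_scope.

Definition primitive_divisor (p m u : nat) : Prop :=
  (u %| p ^ m - 1)%N /\ forall h : nat, (1 <= h)%N -> (h < m)%N -> ~~ (u %| p ^ h - 1)%N.

(* a_i(alpha), with q = p^a, ri = r_i, and iszero = ([alpha]_i == 0).
   The exponent r_i - 1 is an integer exponent (r_i may be 0). *)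
Definition coef_a (q ri : nat) (iszero : bool) : rat :=
  if iszero then
    ((q%:Q - 1) / q%:Q) * ((q%:Q - 1) ^ (ri%:Z - 1) - (-1) ^ (ri%:Z - 1))
  else
    (1 / q%:Q) * ((q%:Q - 1) ^+ ri - (-1) ^+ ri).

(* N_r : sum over (r_1,...,r_b) with r_i >= 0 and sum r; here the index i
   ranges over 'I_b (zero-based) and z i = ([alpha]_{i+1} == 0) = (c_i == 0). *)
Definition N_r (q k b r : nat) (z : 'I_b -> bool) : rat :=
  k%:Q ^+ r *
  \sum_(t : {ffun 'I_b -> 'I_r.+1} | (\sum_(i < b) (t i : nat))%N == r)
     ((r`!)%:Q / \prod_(i < b) ((t i)`!)%:Q) * \prod_(i < b) coef_a q (t i) (z i).

(* Write q = p^a, m = q - 1 and g = omega^k.  Peeling off one variable gives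
   M_{s+1}(alpha) = sum_y M_s(alpha - y^k), and y |-> y^k maps F^* k-to-1 onto the
   (b m)-th roots of unity, which are the (g^b)^l g^i with l < m, i < b.  Hence
   M_s = sum_r C(s,r) k^r W_r, where W_r(alpha) counts the ordered sums of r such
   terms equal to alpha.  Since b m is a primitive divisor of p^(ab) - 1, the
   conjugates g^(q^j), j < b, are distinct, so 1, g, ..., g^(b-1) are linearly
   independent over F_q.  Thus W_r splits along the coordinates c_i of alpha: the
   r terms are shared out among the b coordinates (the multinomial coefficient), and
   c in F_q is an ordered sum of t nonzero elements of F_q in exactly a_i(alpha) ways,
   as both satisfy P_{t+1}(c) = sum_{z <> 0} P_t(c - z). *)

From HB Require Import structures.
From mathcomp Require Import all_boot all_order all_algebra all_field.
From mathcomp Require Import ring zify.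
Import Order.TTheory GRing.Theory Num.Theory.
Local Open Scope ring_scope.
Set Implicit Arguments. Unset Strict Implicit. Unset Printing Implicit Defensive.

Section MultinomialSum.

Variables (R : numFieldType) (b : nat).

Definition multinomial_sum (r : nat) (A : 'I_b -> nat -> R) : R :=
  \sum_(t : {ffun 'I_b -> 'I_r.+1} | (\sum_(i < b) (t i : nat))%N == r)
     ((r`!)%:R / \prod_(i < b) ((t i)`!)%:R) * \prod_(i < b) A i (t i).

Lemma eq_multinomial_sum (r : nat) (A B : 'I_b -> nat -> R) :
  (forall i n, A i n = B i n) -> multinomial_sum r A = multinomial_sum r B.
Proof.
by move=> AB; apply: eq_bigr => t _; congr (_ * _); apply: eq_bigr => i _.
Qed.

Lemma multinomial_sum0 (A : 'I_b -> nat -> R) :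
  multinomial_sum 0 A = \prod_(i < b) A i 0%N.
Proof.
have t0 (t : {ffun 'I_b -> 'I_1}) i : (t i : nat) = 0%N by rewrite (ord1 (t i)).
rewrite /multinomial_sum (big_pred1 [ffun=> ord0]) => [|t]; last first.
  rewrite big1 => [|i _]; last exact: t0.
  by rewrite eqxx; symmetry; apply/eqP/ffunP => i; rewrite ffunE; apply: ord1.
rewrite big1 => [|i _]; last by rewrite ffunE.
by rewrite divr1 mul1r; apply: eq_bigr => i _; rewrite ffunE.
Qed.

Lemma multinomial_coefS (r : nat) (t : 'I_b -> nat) :
  (\sum_(i < b) t i)%N = r.+1 ->
  (r.+1)`!%:R / \prod_(i < b) ((t i)`!)%:R =
  \sum_(i < b | (0 < t i)%N) (r`!)%:R / \prod_(j < b) ((t j - (j == i))`!)%:R :> R.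
Proof.
move=> sum_t.
have fact_neq0 n : (n`!)%:R != 0 :> R by rewrite pnatr_eq0 -lt0n fact_gt0.
have prod_neq0 : \prod_(i < b) ((t i)`!)%:R != 0 :> R.
  by rewrite prodf_seq_neq0; apply/allP => i _; exact: fact_neq0.
have prod_dec i : (0 < t i)%N ->
    \prod_(j < b) ((t j - (j == i))`!)%:R = \prod_(j < b) ((t j)`!)%:R / (t i)%:R :> R.
  move=> t_i_gt0; rewrite (bigD1 i) //= [in RHS](bigD1 i) //= eqxx.
  rewrite (eq_bigr (fun j => ((t j)`!)%:R)) => [|j /negbTE->]; last by rewrite subn0.
  case: (t i) t_i_gt0 => // n _; rewrite subn1 factS natrM /=.
  by field; rewrite addrC natr1 pnatr_eq0.
rewrite [RHS](eq_bigr (fun i => (r`!)%:R / \prod_(j < b) ((t j)`!)%:R * (t i)%:R)); last first.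
  by move=> i t_i_gt0; rewrite prod_dec // invf_div mulrA mulrAC.
rewrite -big_distrr /= [X in _ = _ * X]big_rmcond => [|i]; last first.
  by rewrite lt0n negbK => /eqP->.
by rewrite -natr_sum sum_t factS natrM; field.
Qed.

Lemma multinomial_sum_shift (r : nat) (A : 'I_b -> nat -> R) (i : 'I_b) :
  \sum_(t : {ffun 'I_b -> 'I_r.+2} |
          ((\sum_(j < b) (t j : nat))%N == r.+1) && (0 < t i)%N)
     (r`!)%:R / \prod_(j < b) ((t j - (j == i))`!)%:R * \prod_(j < b) A j (t j)
  = multinomial_sum r (fun j m => A j (m + (j == i))%N).
Proof.
pose up (t : {ffun 'I_b -> 'I_r.+1}) : {ffun 'I_b -> 'I_r.+2} :=
  [ffun j => inord (t j + (j == i))].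
pose down (t : {ffun 'I_b -> 'I_r.+2}) : {ffun 'I_b -> 'I_r.+1} :=
  [ffun j => inord (t j - (j == i))].
have upE t j : (up t j : nat) = (t j + (j == i))%N.
  by rewrite ffunE inordK //; have := ltn_ord (t j); case: (j == i) => /=; lia.
have downK : cancel up down.
  by move=> t; apply/ffunP => j; apply/val_inj; rewrite ffunE /= upE addnK inordK.
rewrite (reindex_onto up down) => [|t /andP[/eqP sum_t t_i_gt0]]; last first.
  apply/ffunP => j; apply/val_inj; rewrite /= upE ffunE inordK; last first.
    have [->|ji] := eqVneq j i; first by rewrite subn1 -ltnS prednK.
    have : (t j + t i <= \sum_(l < b) t l)%N.
      by rewrite (bigD1 j) //= (bigD1 i) 1?eq_sym //= addnA leq_addr.
    by rewrite sum_t subn0 => le; apply: leq_trans le; rewrite -addn1 leq_add2l.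
  by case: eqVneq => [->|] /=; [rewrite subn1 addn1 prednK | rewrite subn0 addn0].
apply: eq_big => [t | t _].
  rewrite downK eqxx andbT upE eqxx addn1 andbT.
  have sum_delta : (\sum_(j < b) (j == i))%N = 1%N.
    by rewrite (bigD1 i) //= eqxx big1 // => j /negbTE->.
  by rewrite (eq_bigr _ (fun j _ => upE t j)) big_split /= sum_delta addn1.
congr (_ / _ * _); apply: eq_bigr => j _; by rewrite upE ?addnK.
Qed.

Lemma multinomial_sumS (r : nat) (A : 'I_b -> nat -> R) :
  multinomial_sum r.+1 A =
  \sum_(i < b) multinomial_sum r (fun j m => A j (m + (j == i))%N).
Proof.
rewrite {1}/multinomial_sum.
under eq_bigr => t /eqP sum_t.
  rewrite (multinomial_coefS sum_t) big_distrl /=.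
over.
rewrite (exchange_big_dep xpredT) //=; apply: eq_bigr => i _.
by rewrite -multinomial_sum_shift; apply: eq_bigl => t.
Qed.

End MultinomialSum.

Section Representations.

Variable V : zmodType.

Definition nreps (T : finType) (f : T -> V) (s : nat) (a : V) : nat :=
  #|[set x : {ffun 'I_s -> T} | \sum_(i < s) f (x i) == a]|.

Lemma nreps0 (T : finType) (f : T -> V) (a : V) : nreps f 0 a = (a == 0).
Proof.
rewrite /nreps; under eq_finset do rewrite big_ord0 eq_sym.
by case: (a == 0); rewrite ?cards0 // cardsT card_ffun card_ord.
Qed.

Lemma nrepsS (T : finType) (f : T -> V) (s : nat) (a : V) :
  nreps f s.+1 a = (\sum_(y : T) nreps f s (a - f y))%N.
Proof.
pose cons (yx : T * {ffun 'I_s -> T}) : {ffun 'I_s.+1 -> T} :=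
  [ffun i => if unlift ord0 i is Some j then yx.2 j else yx.1].
have cons_bij : bijective cons.
  exists (fun x : {ffun 'I_s.+1 -> T} => (x ord0, [ffun j => x (lift ord0 j)])).
    move=> [y x].
    by rewrite /cons ffunE unlift_none; congr (_, _); apply/ffunP => j; rewrite !ffunE liftK.
  by move=> x; apply/ffunP => i; rewrite ffunE; case: unliftP => [j|] ->; rewrite ?ffunE.
rewrite /nreps -sum1_card (reindex cons) /=; last exact: onW_bij.
under [RHS]eq_bigr do rewrite -sum1_card.
rewrite pair_big_dep /=; apply: eq_bigl => -[y x] /=; rewrite !inE big_ord_recl.
rewrite ffunE unlift_none (eq_bigr (fun i => f (x i))) => [|i _]; last by rewrite ffunE liftK.
by rewrite [RHS]eq_sym subr_eq eq_sym addrC.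
Qed.

Lemma sum_binomialS (F : nat -> nat) (s : nat) :
  (\sum_(r < s.+2) 'C(s.+1, r) * F r =
   \sum_(r < s.+1) 'C(s, r) * F r + \sum_(r < s.+1) 'C(s, r) * F r.+1)%N.
Proof.
rewrite big_ord_recl [in RHS]big_ord_recl !bin0 addnAC -addnA; congr (_ + _)%N.
under eq_bigr do rewrite /= binS mulnDl.
by rewrite big_split /= big_ord_recr /= bin_small // mul0n addn0 addnC.
Qed.

(* The hypothesis says that the values of [f], counted with multiplicity, are [0]
   together with [k] copies of the values of [e]. *)
Lemma nreps_binomial (T : finType) (f : T -> V) (I : finType) (e : I -> V) (k : nat) :
  (forall h : V -> nat, \sum_(y : T) h (f y) = h 0%R + k * \sum_(i : I) h (e i))%N ->
  forall s a, nreps f s a = (\sum_(r < s.+1) 'C(s, r) * k ^ r * nreps e r a)%N.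
Proof.
move=> sum_f; elim=> [|s IH] a.
  by rewrite big_ord_recl big_ord0 !nreps0 bin0 expn0 !mul1n addn0.
rewrite nrepsS (sum_f (fun v => nreps f s (a - v))) subr0 IH.
under [RHS]eq_bigr do rewrite -mulnA.
rewrite (sum_binomialS (fun r => k ^ r * nreps e r a)%N).
congr (_ + _)%N; first by apply: eq_bigr => r _; rewrite mulnA.
under eq_bigr do rewrite IH.
rewrite exchange_big big_distrr /=; apply: eq_bigr => r _.
by rewrite -!big_distrr /= -nrepsS expnS; ring.
Qed.

End Representations.

Section Coordinates.

Variables (R : numFieldType) (F : nzRingType) (b : nat) (v : 'I_b -> F).
Variables (T : finType) (y : T -> F) (E : {pred F}).
Hypothesis E_subr : forall x t, x \in E -> x - y t \in E.
Hypothesis v_free : forall c : 'I_b -> F,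
  (forall i, c i \in E) -> \sum_(i < b) c i * v i = 0 -> forall i, c i = 0.

(* As the [v i] are free over [E], a sum of terms [y t * v i] equals
   [\sum_i c i * v i] iff, for each [i], the terms carrying [v i] add up to [c i];
   the multinomial coefficient counts the interleavings of these [b] subsequences. *)
Lemma nreps_coords (r : nat) (c : 'I_b -> F) : (forall i, c i \in E) ->
  (nreps (fun it : 'I_b * T => y it.2 * v it.1) r (\sum_(i < b) c i * v i))%:R =
  multinomial_sum r (fun i t => (nreps y t (c i))%:R) :> R.
Proof.
elim: r c => [|r IH] c c_E.
  rewrite nreps0 multinomial_sum0.
  have [i ci_neq0|c0] := pickP (fun i => c i != 0).
    rewrite [RHS](bigD1 i) //= nreps0 (negbTE ci_neq0) mul0r.
    suff /negbTE-> : \sum_(j < b) c j * v j != 0 by [].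
    by apply: contra ci_neq0 => /eqP/(v_free c_E)->.
  have cj0 j : c j = 0 by apply/eqP/negbFE/c0.
  rewrite big1 => [|j _]; last by rewrite cj0 mul0r.
  by rewrite eqxx big1 // => j _; rewrite nreps0 cj0 eqxx.
rewrite nrepsS -(pair_bigA _ (fun i t => nreps _ r (_ - y t * v i))) natr_sum.
rewrite multinomial_sumS; apply: eq_bigr => i _; rewrite natr_sum.
pose c' t j := c j - y t *+ (j == i).
have c'E t : \sum_(j < b) c j * v j - y t * v i = \sum_(j < b) c' t j * v j.
  rewrite /c'; under [RHS]eq_bigr do rewrite mulrBl.
  rewrite sumrB; congr (_ - _).
  rewrite (bigD1 i) //= eqxx mulr1n big1 ?addr0 // => j /negbTE->.
  by rewrite mulr0n mul0r.
have c'_E t j : c' t j \in E.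
  by rewrite /c'; case: (j == i); rewrite ?mulr1n ?mulr0n ?subr0 ?E_subr.
under eq_bigr do rewrite c'E IH //.
rewrite /multinomial_sum exchange_big /=; apply: eq_bigr => tau _.
rewrite -big_distrr /=; congr (_ * _).
rewrite [RHS](bigD1 i) //= eqxx addn1 nrepsS natr_sum big_distrl /=.
apply: eq_bigr => t _; rewrite (bigD1 i) //=; congr (_ * _); first by rewrite /c' eqxx mulr1n.
by apply: eq_bigr => j /negbTE ji; rewrite /c' ji addn0 mulr0n subr0.
Qed.

End Coordinates.

(* Gets rid of the integer exponent [n - 1] of [coef_a], which is [-1] for [n = 0]. *)
Lemma coef_a_trueE (q n : nat) : (1 < q)%N ->
  coef_a q n true = ((q%:R - 1) ^+ n + (q%:R - 1) * (-1) ^+ n) / q%:R.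
Proof.
move=> q_gt1; rewrite /coef_a /= -!pmulrn.
have q_neq0 : q%:R != 0 :> rat by rewrite pnatr_eq0 -lt0n ltnW.
have q1_neq0 : q%:R - 1 != 0 :> rat by rewrite subr_eq0 pnatr_eq1 gtn_eqF.
case: n => [|n].
  by rewrite !exprN1 invrN1 !expr0; field; rewrite q_neq0 q1_neq0.
have -> : (n.+1%:Z - 1 = n%:Z)%R by rewrite -addn1 PoszD addrK.
rewrite -!exprnP !exprS; field.
by rewrite q_neq0.
Qed.

Lemma coef_a0 (q : nat) (z : bool) : (1 < q)%N -> coef_a q 0 z = z%:R.
Proof.
move=> q_gt1; have q_neq0 : q%:R != 0 :> rat by rewrite pnatr_eq0 -lt0n ltnW.
case: z; last by rewrite /coef_a !expr0 subrr mulr0.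
by rewrite coef_a_trueE // !expr0 mulr1 addrC subrK divff.
Qed.

Lemma coef_aS (q n : nat) (z : bool) : (1 < q)%N ->
  coef_a q n.+1 z = (q%:R - 1) * coef_a q n false +
                    (~~ z)%:R * (coef_a q n true - coef_a q n false).
Proof.
move=> q_gt1; have q_neq0 : q%:R != 0 :> rat by rewrite pnatr_eq0 -lt0n ltnW.
by case: z; rewrite !coef_a_trueE // /coef_a /= -!pmulrn !exprS; field.
Qed.

(* [y] lists each nonzero element of [E] once, so [nreps y n x] counts the ordered
   sums of [n] nonzero elements of [E] equal to [x]. *)
Lemma nreps_coef_a (V : zmodType) (T : finType) (y : T -> V) (E : {pred V}) (q : nat) :
  (1 < q)%N -> #|T| = (q - 1)%N ->
  (forall x l, x \in E -> x - y l \in E) ->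
  (forall x, x \in E -> #|[pred l | y l == x]| = (x != 0)) ->
  forall n x, x \in E -> (nreps y n x)%:R = coef_a q n (x == 0).
Proof.
move=> q_gt1 card_T E_subr y_count; elim=> [|n IH] x x_E.
  by rewrite nreps0 coef_a0.
have count_x : \sum_l (y l == x)%:R = (x != 0)%:R :> rat.
  rewrite -(y_count x x_E) -sum1_card natr_sum [RHS]big_mkcond.
  by apply: eq_bigr => l _; rewrite inE; case: (y l == x).
rewrite nrepsS natr_sum coef_aS //.
set t := coef_a q n true; set f := coef_a q n false.
under eq_bigr => l _.
  rewrite IH ?E_subr // subr_eq0 eq_sym.
  have -> : coef_a q n (y l == x) = f + (y l == x)%:R * (t - f).
    by case: (y l == x); rewrite ?mul1r ?mul0r ?addr0 // addrC subrK.
over.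
rewrite big_split sumr_const card_T -mulr_suml count_x -[f *+ _]mulr_natl.
by rewrite natrB // ltnW.
Qed.

Section FrobeniusPowers.

Variables (F : fieldType) (p : nat).
Hypothesis pcharFp : p \in [pchar F].
Let p_prime : prime p := pcharf_prime pcharFp.

Lemma pnat_pchar_expn (e : nat) : [pchar F].-nat (p ^ e)%N.
Proof. by rewrite pnatX (pnatE _ p_prime) pcharFp. Qed.

Lemma expr0_pchar (e : nat) : (0 : F) ^+ (p ^ e) = 0.
Proof. by rewrite expr0n expn_eq0 eqn0Ngt prime_gt0. Qed.

Lemma expr_pchar_subr (e : nat) (x y : F) :
  (x - y) ^+ (p ^ e) = x ^+ (p ^ e) - y ^+ (p ^ e).
Proof. by rewrite exprDn_pchar ?exprNn_pchar ?pnat_pchar_expn. Qed.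

Lemma expr_pchar_sum (e b : nat) (G : 'I_b -> F) :
  (\sum_(i < b) G i) ^+ (p ^ e) = \sum_(i < b) G i ^+ (p ^ e).
Proof.
apply: (big_morph (fun x => x ^+ (p ^ e))) => [x y|].
  by rewrite exprDn_pchar ?pnat_pchar_expn.
exact: expr0_pchar.
Qed.

Variables (e b u : nat) (g : F).
Hypothesis g_prim : u.-primitive_root g.
Hypothesis u_ndvd : forall h, (0 < h < b)%N -> ~~ (u %| p ^ (e * h) - 1)%N.

Lemma uniq_frobenius_conj : uniq [seq g ^+ (p ^ (e * n)) | n <- iota 0 b].
Proof.
have u_coprime n : coprime u (p ^ (e * n)).
  rewrite coprimeXr // coprime_sym (prime_coprime _ p_prime).
  by rewrite (dvdn_pcharf pcharFp) (prim_root_natf_neq0 g_prim).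
have conj_neq n l : (n < l)%N -> (l < b)%N -> g ^+ (p ^ (e * n)) != g ^+ (p ^ (e * l)).
  move=> lt_nl lt_lb; rewrite (eq_prim_root_expr g_prim) eq_sym eqn_mod_dvd; last first.
    by rewrite leq_pexp2l ?prime_gt0 // leq_mul2l ltnW ?orbT.
  rewrite -(subnKC (ltnW lt_nl)) mulnDr expnD -{2}[(p ^ (e * n))%N]muln1 -mulnBr.
  by rewrite Gauss_dvdr // u_ndvd // subn_gt0 lt_nl (leq_ltn_trans (leq_subr _ _)).
rewrite map_inj_in_uniq ?iota_uniq // => n l; rewrite !mem_iota /= => lt_nb lt_lb /eqP.
case: (ltngtP n l) => // [lt_nl|lt_ln]; first by rewrite (negbTE (conj_neq n l lt_nl lt_lb)).
by rewrite eq_sym (negbTE (conj_neq l n lt_ln lt_nb)).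
Qed.

Lemma prim_root_powers_free (d : 'I_b -> F) : (forall i, d i ^+ (p ^ e) = d i) ->
  \sum_(i < b) d i * g ^+ i = 0 -> forall i, d i = 0.
Proof.
move=> d_fixed sum_d0.
(* [P] would have the [b] distinct roots [g ^+ (p ^ (e * n))], [n < b]. *)
pose P : {poly F} := \poly_(j < b) oapp d 0 (insub j).
have P_eval x : P.[x] = \sum_(i < b) d i * x ^+ i.
  by rewrite horner_poly; apply: eq_bigr => i _; rewrite valK.
have P0 : P = 0.
  apply: contraTeq (size_poly b (fun j => oapp d 0 (insub j))) => P_neq0.
  rewrite -ltnNge -{1}(size_iota 0 b) -(size_map (fun n => g ^+ (p ^ (e * n)))).
  apply: max_poly_roots P_neq0 _ uniq_frobenius_conj.
  apply/allP => _ /mapP[n _ ->]; rewrite /root P_eval.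
  apply/eqP; transitivity ((\sum_(i < b) d i * g ^+ i) ^+ (p ^ (e * n))).
    rewrite expr_pchar_sum; apply: eq_bigr => i _; rewrite exprMn exprAC; congr (_ * _).
    by elim: n => [|n IHn]; rewrite ?muln0 // mulnS expnD exprM d_fixed.
  by rewrite sum_d0 expr0_pchar.
move=> i; have := coef_poly b (fun j => oapp d 0 (insub j)) i.
by rewrite -/P P0 coef0 ltn_ord valK.
Qed.

End FrobeniusPowers.


Lemma big_ord_mul (R : Type) (idx : R) (op : Monoid.law idx) (m b : nat) (G : nat -> R) :
  \big[op/idx]_(j < m * b) G j = \big[op/idx]_(l < m) \big[op/idx]_(i < b) G (l * b + i)%N.
Proof.
elim: m => [|m IH]; first by rewrite mul0n !big_ord0.
by rewrite mulSnr big_split_ord /= IH big_ord_recr.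
Qed.

Lemma sum_nonzero_prim_root (F : finFieldType) (n : nat) (w : F) (h : F -> nat) :
  n.-primitive_root w -> #|F| = n.+1 ->
  (\sum_(y | y != 0%R) h y = \sum_(j < n) h (w ^+ j))%N.
Proof.
move=> w_prim card_F; have n_gt0 := prim_order_gt0 w_prim.
have unity (y : F) : y != 0 -> y ^+ n = 1.
  by move=> y_neq0; apply: (mulfI y_neq0); rewrite mulr1 -exprS -card_F expf_card.
transitivity (\sum_(y in [set w ^+ (j : nat) | j : 'I_n]) h y).
  apply: eq_bigl => y; apply/idP/imsetP => [y_neq0|[j _ ->]].
    by have [j ->] := prim_rootP w_prim (unity y y_neq0); exists j.
  by rewrite expf_neq0 // (prim_root_eq0 w_prim) -lt0n.
rewrite big_imset // => i j _ _ /eqP.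
by rewrite (eq_prim_root_expr w_prim) !modn_small // => /eqP /val_inj.
Qed.

Lemma sum_expf (F : finFieldType) (k d : nat) (w : F) (h : F -> nat) :
  (k * d).-primitive_root w -> #|F| = (k * d).+1 ->
  (\sum_(y : F) h (y ^+ k) = h 0%R + k * \sum_(j < d) h (w ^+ k ^+ j))%N.
Proof.
move=> w_prim card_F.
have /andP[k_gt0 _] : (0 < k)%N && (0 < d)%N by rewrite -muln_gt0 (prim_order_gt0 w_prim).
rewrite (bigD1 0) //= expr0n gtn_eqF //; congr (_ + _)%N.
rewrite (sum_nonzero_prim_root (fun y => h (y ^+ k)) w_prim card_F).
have wkd : w ^+ k ^+ d = 1 by rewrite -exprM prim_expr_order.
under [LHS]eq_bigr do rewrite exprAC.
have /= -> := @big_ord_mul _ 0%N addn k d (fun j => h (w ^+ k ^+ j)).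
under eq_bigr do under eq_bigr do rewrite exprD exprM exprAC wkd expr1n mul1r.
by rewrite sum_nat_const card_ord.
Qed.

Lemma nreps_expf (F : finFieldType) (k b m : nat) (w : F) :
  (k * (b * m)).-primitive_root w -> #|F| = (k * (b * m)).+1 ->
  forall s a, nreps (fun x : F => x ^+ k) s a =
    (\sum_(r < s.+1) 'C(s, r) * k ^ r *
       nreps (fun it : 'I_b * 'I_m => (w ^+ k ^+ b ^+ it.2 * w ^+ k ^+ it.1)%R) r a)%N.
Proof.
move=> w_prim card_F; apply: nreps_binomial => h.
rewrite (sum_expf h w_prim card_F) [(b * m)%N]mulnC.
have /= -> := @big_ord_mul _ 0%N addn m b (fun j => h (w ^+ k ^+ j)).
rewrite exchange_big pair_bigA /=; congr (_ + _ * _)%N.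
by apply: eq_bigr => -[i l] _ /=; rewrite exprD mulnC exprM.
Qed.

Lemma nreps_prim_root_coords (F : fieldType) (p e b : nat) (g : F)
    (c : 'I_b -> F) (r : nat) :
  p \in [pchar F] -> (0 < e)%N -> (b * (p ^ e - 1)).-primitive_root g ->
  (forall h, (0 < h < b)%N -> ~~ (b * (p ^ e - 1) %| p ^ (e * h) - 1)%N) ->
  (forall i, c i ^+ (p ^ e) = c i) ->
  (nreps (fun it : 'I_b * 'I_(p ^ e - 1) => g ^+ b ^+ it.2 * g ^+ it.1) r
     (\sum_(i < b) c i * g ^+ i))%:R =
  multinomial_sum r (fun i n => coef_a (p ^ e) n (c i == 0)).
Proof.
move=> pcharFp e_gt0 g_prim u_ndvd c_fixed.
set q := (p ^ e)%N in g_prim u_ndvd c_fixed *.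
have q_gt1 : (1 < q)%N.
  by rewrite -(exp1n e) ltn_exp2r // prime_gt1 // (pcharf_prime pcharFp).
have /andP[b_gt0 m_gt0] : (0 < b)%N && (0 < q - 1)%N.
  by rewrite -muln_gt0 (prim_order_gt0 g_prim).
have beta_prim : (q - 1).-primitive_root (g ^+ b).
  by have := exp_prim_root g_prim b; rewrite gcdnMr mulKn.
have beta_fixed l : (g ^+ b ^+ l) ^+ q = g ^+ b ^+ l.
  by rewrite exprAC -(subnK (ltnW q_gt1)) exprD (prim_expr_order beta_prim) mul1r.
pose E := [pred x : F | x ^+ q == x].
have E_subr x (l : 'I_(q - 1)) : x \in E -> x - g ^+ b ^+ l \in E.
  by rewrite !inE (expr_pchar_subr pcharFp) beta_fixed => /eqP->.
have beta_count x : x \in E -> #|[pred l : 'I_(q - 1) | g ^+ b ^+ l == x]| = (x != 0).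
  rewrite inE => /eqP x_fixed; have [->|x_neq0] := eqVneq x 0.
    by apply: eq_card0 => l; rewrite inE expf_eq0 (prim_root_eq0 beta_prim) gtn_eqF ?andbF.
  have x_unity : x ^+ (q - 1) = 1.
    by apply: (mulfI x_neq0); rewrite mulr1 -exprS subn1 prednK ?x_fixed // ltnW.
  have [i ->] := prim_rootP beta_prim x_unity.
  apply: eq_card1 => l; rewrite inE (eq_prim_root_expr beta_prim) !modn_small //.
have v_free d : (forall i, d i \in E) -> \sum_(i < b) d i * g ^+ i = 0 -> forall i, d i = 0.
  move=> d_E; apply: (prim_root_powers_free pcharFp g_prim u_ndvd) => i.
  exact/eqP/d_E.
rewrite (nreps_coords rat E_subr v_free) => [|i]; last by rewrite inE c_fixed.
apply: eq_multinomial_sum => i n.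
by rewrite (nreps_coef_a q_gt1 (card_ord _) E_subr beta_count) // inE c_fixed.
Qed.

Theorem theorem4p4 (p a b k : nat) (F : finFieldType)
  (Hp : prime p) (Ha : (0 < a)%N) (Hb : (1 < b)%N)
  (HF : #|F| = (p ^ (a * b))%N)
  (Hk : (k * (b * (p ^ a - 1)))%N = (p ^ (a * b) - 1)%N)
  (Hu : primitive_divisor p (a * b) (b * (p ^ a - 1)))
  (omega : F) (Homega : (p ^ (a * b) - 1).-primitive_root omega)
  (alpha : F) (c : 'I_b -> F)
  (Hc : forall i, c i ^+ (p ^ a) = c i)
  (Halpha : alpha = \sum_(i < b) c i * omega ^+ (i * k))
  (s : nat) (Hs : (1 <= s)%N) :
  (#|[set x : {ffun 'I_s -> F} | \sum_(i < s) x i ^+ k == alpha]|)%:Q =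
    (if alpha == 0 then 1 else 0) +
    \sum_(1 <= r < s.+1) ('C(s, r))%:Q * @N_r (p ^ a) k b r (fun i => c i == 0).
Proof.
have pcharFp : p \in [pchar F] := card_finPcharP HF Hp.
have w_prim : (k * (b * (p ^ a - 1))).-primitive_root omega by rewrite Hk.
have card_F : #|F| = (k * (b * (p ^ a - 1))).+1.
  by rewrite Hk HF subn1 prednK // expn_gt0 prime_gt0.
have k_gt0 : (0 < k)%N by move: (prim_order_gt0 w_prim); rewrite muln_gt0 => /andP[].
have g_prim : (b * (p ^ a - 1)).-primitive_root (omega ^+ k).
  by have := exp_prim_root w_prim k; rewrite gcdnMr mulKn.
have u_ndvd h : (0 < h < b)%N -> ~~ (b * (p ^ a - 1) %| p ^ (a * h) - 1)%N.
  by case/andP=> h_gt0 h_lt_b; apply: Hu.2; rewrite ?muln_gt0 ?Ha ?ltn_pmul2l.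
have alphaE : alpha = \sum_(i < b) c i * omega ^+ k ^+ i.
  by rewrite Halpha; apply: eq_bigr => i _; rewrite -exprM mulnC.
rewrite -[LHS]/((nreps (fun x : F => x ^+ k) s alpha)%:R).
rewrite (nreps_expf w_prim card_F) natr_sum big_ord_recl bin0 expn0 !mul1n nreps0.
congr (_ + _); first by case: (alpha == 0).
rewrite big_add1 /= big_mkord; apply: eq_bigr => r _.
rewrite !natrM natrX alphaE (nreps_prim_root_coords _ pcharFp) //.
by rewrite /N_r -mulrA.
Qed.
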